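(* Let $a,b,c$ be non-constant polynomials in $\mathbb{F}_2[t]$ and let $\boldsymbol{\varepsilon}=a,(b,c)^\infty$, i.e. $\varepsilon_0=a$, $\varepsilon_{2m+1}=b$, $\varepsilon_{2m+2}=c$ for $m\geq 0$. Let $\beta=1/CF(\mathbf{s}(\boldsymbol{\varepsilon}))$. Then $$\beta^4=\frac{bc(b+c)}{a}+\frac{c^2}{a^2}+bc(b+c)\,\beta+bc\,\beta^2.$$
   Context: Given a sequence $\boldsymbol{\varepsilon}=(\varepsilon_n)_{n\geq 0}$, define words $W_0=$ empty word and $W_{n+1}=W_n\,\varepsilon_n\,W_n$ (concatenation) for $n\geq 0$; $\mathbf{s}(\boldsymbol{\varepsilon})=(s_i)_{i\geq 0}$ is the infinite word beginning with every $W_n$, i.e. $\varepsilon_0\varepsilon_1\varepsilon_0\varepsilon_2\varepsilon_0\varepsilon_1\varepsilon_0\varepsilon_3\cdots$. $CF(\mathbf{s}(\boldsymbol{\varepsilon}))=[s_0,s_1,\dots]=s_0+1/(s_1+1/(s_2+\cdots))$ is the infinite continued fraction in $\mathbb{F}_2((1/t))$ with these partial quotients. *)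

From Stdlib Require Import ClassicalEpsilon.
From mathcomp Require Import all_boot all_order all_algebra.
From mathcomp Require Import zify.
Set Implicit Arguments. Unset Strict Implicit. Unset Printing Implicit Defensive.
Import Order.TTheory GRing.Theory Num.Theory.
Local Open Scope ring_scope.

(* An element of F_2((1/t)) is a family of coefficients (coefficient of t^k,
   k : int) vanishing for all sufficiently large k. *)
Definition bounded_above (f : int -> 'F_2) : Prop :=
  exists N : int, forall k : int, N < k -> f k = 0.

Record LS := MkLS { coef : int -> 'F_2; coefP : bounded_above coef }.

Definition ub (x : LS) : int :=
  proj1_sig (constructive_indefinite_description _ (coefP x)).

Lemma ubP (x : LS) k : ub x < k -> coef x k = 0.
Proof.
rewrite /ub; case: constructive_indefinite_description => N HN /=; exact: HN.
Qed.

Definition lsadd_coef (x y : LS) (k : int) : 'F_2 := coef x k + coef y k.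

Lemma lsadd_bounded x y : bounded_above (lsadd_coef x y).
Proof.
exists (Num.max (ub x) (ub y)) => k; rewrite gt_max => /andP[hx hy].
by rewrite /lsadd_coef !ubP ?addr0.
Qed.

Definition lsadd (x y : LS) : LS := MkLS (lsadd_bounded x y).

(* multiplication (Cauchy product): the coefficient of t^k is
   sum_{i + j = k} x_i y_j; only indices i in [k - ub y, ub x] can contribute,
   and the sum below runs over i = k - ub y + m, m < |ub x + ub y - k| + 1
   (when k > ub x + ub y every term vanishes anyway). *)
Definition lsmul_coef (x y : LS) (k : int) : 'F_2 :=
  \sum_(m < (absz (ub x + ub y - k)%R).+1)
     coef x (k - ub y + m%:Z) * coef y (k - (k - ub y + m%:Z)).

Lemma lsmul_bounded x y : bounded_above (lsmul_coef x y).
Proof.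
exists (ub x + ub y) => k hk; rewrite /lsmul_coef big1 // => m _.
rewrite ubP ?mul0r //.
have h0 : (0 <= m%:Z)%R by [].
move: hk h0; set u := ub x; set v := ub y; set w := m%:Z => hk h0.
lia.
Qed.

Definition lsmul (x y : LS) : LS := MkLS (lsmul_bounded x y).

Definition lspoly_coef (p : {poly 'F_2}) (k : int) : 'F_2 :=
  match k with Posz n => p`_n | Negz _ => 0 end.

Lemma lspoly_bounded p : bounded_above (lspoly_coef p).
Proof.
exists (size p)%:Z => -[n|n] //= hn; apply: nth_default; lia.
Qed.

Definition lspoly (p : {poly 'F_2}) : LS := MkLS (lspoly_bounded p).

Definition lsone : LS := lspoly 1.

Definition lsexp (x : LS) (n : nat) : LS := iter n (lsmul x) lsone.

(* convergence in the (1/t)-adic topology: for every N, eventually x_n and x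
   agree in all coefficients of degree >= N *)
Definition ls_cvg (xs : nat -> LS) (x : LS) : Prop :=
  forall N : int, exists n0 : nat, forall n, (n0 <= n)%N ->
    forall k : int, N <= k -> coef (xs n) k = coef x k.

(* cf_fin [:: s_0; ...; s_n] y  <->  y = [s_0, s_1, ..., s_n]
   = s_0 + 1/(s_1 + 1/(... + 1/s_n)) in F_2((1/t)) (all inverses existing). *)
Fixpoint cf_fin (l : seq {poly 'F_2}) (y : LS) {struct l} : Prop :=
  match l with
  | [::] => False
  | s :: rest =>
      match rest with
      | [::] => y = lspoly s
      | _ :: _ => exists z w : LS,
          cf_fin rest z /\ lsmul w z = lsone /\ y = lsadd (lspoly s) w
      end
  end.

Definition isCF (s : nat -> {poly 'F_2}) (x : LS) : Prop :=
  exists xs : nat -> LS,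
    (forall n, cf_fin (mkseq s n.+1) (xs n)) /\ ls_cvg xs x.

Fixpoint Wword (eps : nat -> {poly 'F_2}) (n : nat) : seq {poly 'F_2} :=
  match n with
  | 0 => [::]
  | n'.+1 => Wword eps n' ++ eps n' :: Wword eps n'
  end.

(* s_i is the i-th letter of W_{i+1} (which has length 2^(i+1) - 1 > i, and
   every W_n is a prefix of W_{n+1}) *)
Definition sseq (eps : nat -> {poly 'F_2}) (i : nat) : {poly 'F_2} :=
  nth 0 (Wword eps i.+1) i.

Definition eps_abc (a b c : {poly 'F_2}) (n : nat) : {poly 'F_2} :=
  if n == 0%N then a else if odd n then b else c.

(* Let P_m/Q_m be the finite continued fraction of the prefix W_m of s(eps).
   As W_{m+1} = W_m eps_m W_m with W_m a palindrome, the continuant matrices give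
   P_{m+1} = eps_m P_m^2 and Q_{m+1} = eps_m P_m Q_m + 1, hence beta_m := Q_m/P_m
   satisfies beta_{m+1} = beta_m + 1/P_{m+1} with 1/P_{m+1} = (1/P_m)^2/eps_m.
   In characteristic 2 the quartic
     F(z) = z^4 + bc z^2 + bc(b+c) z + bc(b+c)/a + c^2/a^2
   satisfies F(z + d) = F(z) + d^4 + bc d^2 + bc(b+c) d, and induction on m gives
   F(beta_m) = bc(b+c)/P_{m+1} + bc eps_{m+2}/P_{m+2}, which tends to 0 in
   F_2((1/t)).  Since beta_m tends to beta, F(beta) = 0. *)

From HB Require Import structures.
From mathcomp Require Import all_boot all_order all_algebra zify ring.
From mathcomp Require Import boolp.
Set Implicit Arguments. Unset Strict Implicit. Unset Printing Implicit Defensive.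
Import Order.TTheory GRing.Theory Num.Theory.
Local Open Scope ring_scope.

Lemma exprD_pchar2 (R : comNzRingType) (x y : R) n :
  2 \in [pchar R] -> (x + y) ^+ (2 ^ n) = x ^+ (2 ^ n) + y ^+ (2 ^ n).
Proof.
move=> pcharR2; apply: exprDn_pchar.
by rewrite (eq_pnat _ (pcharf_eq pcharR2)) pnatX pnat_id ?orTb.
Qed.

Lemma pchar_F2 : 2 \in [pchar 'F_2].
Proof. exact: pchar_Fp. Qed.

Lemma pchar_polyF2 : 2 \in [pchar {poly 'F_2}].
Proof. by rewrite pchar_poly pchar_F2. Qed.

Lemma neq0_mulf (R : idomainType) (x y : R) : x * y != 0 -> x != 0 /\ y != 0.
Proof. by rewrite mulf_eq0 negb_or => /andP. Qed.

Lemma ls_ext (x y : LS) : coef x =1 coef y -> x = y.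
Proof.
case: x => fx px; case: y => fy py /= /funext E; subst fy.
by congr MkLS; apply: Prop_irrelevance.
Qed.

Lemma coef_neq0_le_ub (x : LS) i : coef x i != 0 -> i <= ub x.
Proof. by rewrite leNgt; apply: contra => /ubP ->. Qed.

(** * Sums over windows of integers *)

Section WindowSums.

Variable V : nmodType.

Definition wsum (L : int) (n : nat) (f : int -> V) : V := \sum_(m < n) f (L + m%:Z).

Definition supported_in (f : int -> V) (L : int) (n : nat) :=
  forall i, f i != 0 -> L <= i /\ i < L + n%:Z.

Lemma wsum_extendr L n f e : supported_in f L n -> wsum L (n + e) f = wsum L n f.
Proof.
move=> S; elim: e => [|e IH]; first by rewrite addn0.
rewrite addnS /wsum big_ord_recr /= -/(wsum _ _ _) IH.
suff -> : f (L + (n + e)%N%:Z) = 0 by rewrite addr0.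
by apply/eqP; apply: contraT => /S [_]; lia.
Qed.

Lemma wsum_extendl L n f d e : supported_in f L n ->
  wsum (L - d%:Z) (d + n + e) f = wsum L n f.
Proof.
move=> S; elim: d => [|d IH]; first by rewrite subr0 add0n wsum_extendr.
rewrite -IH /wsum addSn addSn big_ord_recl /=.
have -> : f (L - d.+1%:Z + 0%N%:Z) = 0.
  by apply/eqP; apply: contraT => /S [H _]; lia.
by rewrite add0r; apply: eq_bigr => i _; congr f; rewrite /bump /=; lia.
Qed.

Lemma wsum_widen L n f L' n' : supported_in f L n ->
  L' <= L -> L + n%:Z <= L' + n'%:Z -> wsum L' n' f = wsum L n f.
Proof.
move=> S H1 H2.
have -> : L' = L - (absz (L - L'))%:Z by lia.
have -> : n' = (absz (L - L') + n + (n' - absz (L - L') - n))%N by lia.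
exact: wsum_extendl.
Qed.

Lemma eq_wsum_supported f L n L' n' : supported_in f L n -> supported_in f L' n' ->
  wsum L n f = wsum L' n' f.
Proof.
move=> S S'; pose Lm := Num.min L L'.
pose nm := absz ((Num.max (L + n%:Z) (L' + n'%:Z) - Lm)%R).
rewrite -(@wsum_widen L n f Lm nm) // ?(@wsum_widen L' n' f Lm nm) //; rewrite /nm /Lm; lia.
Qed.

Lemma wsum_rev f L n k : wsum L n (fun i => f (k - i)) = wsum (k - L - n%:Z + 1) n f.
Proof.
rewrite /wsum (reindex_inj rev_ord_inj) /=; apply: eq_bigr => i _; congr f.
have := ltn_ord i; lia.
Qed.

Lemma wsum_shift f L n d : wsum L n (fun j => f (d + j)) = wsum (d + L) n f.
Proof. by apply: eq_bigr => i _; rewrite addrA. Qed.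

End WindowSums.

(** * The ring of Laurent series *)

Definition mul_term (x y : LS) (k i : int) := coef x i * coef y (k - i).

Definition win (L U : int) : nat := (absz (U - L)).+1.

Lemma coef_lsadd x y k : coef (lsadd x y) k = coef x k + coef y k.
Proof. by []. Qed.

Lemma coef_mul_win x y k :
  coef (lsmul x y) k = wsum (k - ub y) (win (k - ub y) (ub x)) (mul_term x y k).
Proof.
rewrite /= /lsmul_coef /wsum /win.
by have -> : ub x + ub y - k = ub x - (k - ub y) by lia.
Qed.

Lemma coef_mul x y k L n : supported_in (mul_term x y k) L n ->
  coef (lsmul x y) k = wsum L n (mul_term x y k).
Proof.
move=> S; rewrite coef_mul_win; apply: eq_wsum_supported => //.
by move=> i /neq0_mulf [/coef_neq0_le_ub H1 /coef_neq0_le_ub H2]; rewrite /win; lia.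
Qed.

Lemma coef_mul_neq0_le x y k : coef (lsmul x y) k != 0 -> k <= ub x + ub y.
Proof.
rewrite leNgt; apply: contra => H.
have S : supported_in (mul_term x y k) 0 0.
  by move=> i /neq0_mulf [/coef_neq0_le_ub H1 /coef_neq0_le_ub H2]; lia.
by rewrite (coef_mul S) /wsum big_ord0.
Qed.

Lemma lsmulC : commutative lsmul.
Proof.
move=> x y; apply: ls_ext => k.
rewrite (@coef_mul y x k (k - ub x) (win (k - ub x) (ub y))); last first.
  by move=> i /neq0_mulf [/coef_neq0_le_ub H1 /coef_neq0_le_ub H2]; rewrite /win; lia.
have -> : wsum (k - ub x) (win (k - ub x) (ub y)) (mul_term y x k) =
          wsum (k - ub x) (win (k - ub x) (ub y)) (fun i => mul_term x y k (k - i)).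
  by apply: eq_bigr => i _; rewrite /mul_term mulrC; congr (_ * coef y _); lia.
rewrite wsum_rev coef_mul_win; apply: eq_wsum_supported;
  by move=> i /neq0_mulf [/coef_neq0_le_ub H1 /coef_neq0_le_ub H2]; rewrite /win; lia.
Qed.

Section Associativity.

Variables (x y z : LS) (k : int).
Let A := ub x.
Let B := ub y.
Let C := ub z.
Let LI := k - B - C.
Let nI := win LI A.

Lemma coef_mul_mulr : coef (lsmul x (lsmul y z)) k =
  wsum LI nI (fun i => wsum (k - A - C) (win (k - A - C) B)
    (fun j => coef x i * (coef y j * coef z (k - i - j)))).
Proof.
rewrite (@coef_mul _ _ _ LI nI); last first.
  by move=> i /neq0_mulf [/coef_neq0_le_ub H1 /coef_mul_neq0_le H2]; rewrite /nI /win /LI; lia.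
apply: eq_bigr => m _; rewrite /mul_term /wsum -mulr_sumr.
have [->|/coef_neq0_le_ub H] := eqVneq (coef x (LI + m%:Z)) 0; first by rewrite !mul0r.
congr (_ * _); rewrite (@coef_mul _ _ _ (k - A - C) (win (k - A - C) B)) //.
by move=> j /neq0_mulf [/coef_neq0_le_ub H1 /coef_neq0_le_ub H2]; rewrite /win /LI; lia.
Qed.

Lemma coef_mull_mul : coef (lsmul (lsmul x y) z) k =
  wsum (k - C) (win (k - C) (A + B))
    (fun l => wsum LI nI (fun i => coef x i * coef y (l - i) * coef z (k - l))).
Proof.
rewrite (@coef_mul _ _ _ (k - C) (win (k - C) (A + B))); last first.
  by move=> i /neq0_mulf [/coef_mul_neq0_le H1 /coef_neq0_le_ub H2]; rewrite /win; lia.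
apply: eq_bigr => m _; rewrite /mul_term /wsum -mulr_suml.
have [->|/coef_neq0_le_ub H] := eqVneq (coef z (k - (k - C + m%:Z))) 0; first by rewrite !mulr0.
congr (_ * _); rewrite (@coef_mul _ _ _ LI nI) //.
by move=> j /neq0_mulf [/coef_neq0_le_ub H1 /coef_neq0_le_ub H2]; rewrite /nI /win /LI in H *; lia.
Qed.

End Associativity.

Lemma lsmulA : associative lsmul.
Proof.
move=> x y z; apply: ls_ext => k.
rewrite coef_mul_mulr coef_mull_mul [RHS]/wsum exchange_big {1}/wsum /=.
apply: eq_bigr => m _; set i := k - ub y - ub z + m%:Z.
have [x0|/coef_neq0_le_ub Hi] := eqVneq (coef x i) 0.
  by rewrite /wsum !big1 // => j _; rewrite x0 !mul0r.
rewrite -[RHS]/(wsum (k - ub z) (win (k - ub z) (ub x + ub y))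
                  (fun l => coef x i * coef y (l - i) * coef z (k - l))).
transitivity (wsum (i + (k - ub x - ub z)) (win (k - ub x - ub z) (ub y))
                (fun l => coef x i * coef y (l - i) * coef z (k - l))).
  rewrite -wsum_shift; apply: eq_bigr => j _ /=.
  by rewrite mulrA; congr (_ * coef y _ * coef z _); lia.
by apply: eq_wsum_supported => l
  /neq0_mulf [/neq0_mulf [_ /coef_neq0_le_ub H1] /coef_neq0_le_ub H2];
  rewrite /win; lia.
Qed.

Definition lszero := lspoly 0.

Lemma coef_lspoly p k : coef (lspoly p) k = if k is Posz n then p`_n else 0.
Proof. by []. Qed.

Lemma coef_lszero k : coef lszero k = 0.
Proof. by rewrite coef_lspoly; case: k => // n; rewrite coef0. Qed.

Lemma lsmulDl : left_distributive lsmul lsadd.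
Proof.
move=> x y z; apply: ls_ext => k.
pose L := k - ub z; pose n := win L (`|ub x|%:Z + `|ub y|%:Z).
have S w : ub w <= `|ub x|%:Z + `|ub y|%:Z -> supported_in (mul_term w z k) L n.
  by move=> Hw i /neq0_mulf [/coef_neq0_le_ub H1 /coef_neq0_le_ub H2]; rewrite /n /win /L; lia.
have Sx : supported_in (mul_term x z k) L n by apply: S; lia.
have Sy : supported_in (mul_term y z k) L n by apply: S; lia.
have Sxy : supported_in (mul_term (lsadd x y) z k) L n.
  move=> i /neq0_mulf []; rewrite coef_lsadd => H1 /coef_neq0_le_ub H2.
  have : i <= ub x \/ i <= ub y.
    have [x0|/coef_neq0_le_ub] := eqVneq (coef x i) 0; last by left.
    by right; apply: coef_neq0_le_ub; move: H1; rewrite x0 add0r.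
  rewrite /n /win /L; lia.
rewrite coef_lsadd !(coef_mul Sx, coef_mul Sy, coef_mul Sxy) /wsum -big_split.
by apply: eq_bigr => m _; rewrite /mul_term coef_lsadd mulrDl.
Qed.

Lemma lsmul1 : left_id lsone lsmul.
Proof.
move=> x; apply: ls_ext => k.
rewrite (@coef_mul _ _ _ 0 1); last first.
  move=> i /neq0_mulf [] /[swap] _; rewrite /lsone coef_lspoly.
  by case: i => [[|n]|n] //=; rewrite coef1.
by rewrite /wsum big_ord1 /mul_term /lsone coef_lspoly /= coef1 /= mul1r subr0.
Qed.

HB.instance Definition _ := gen_eqMixin LS.
HB.instance Definition _ := gen_choiceMixin LS.

Lemma lsone_neq0 : lsone != lszero.
Proof.
apply/eqP => /(congr1 (coef^~ 0)).
by rewrite coef_lszero /lsone coef_lspoly /= coef1 /=; apply/eqP; rewrite oner_eq0.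
Qed.

Lemma lsaddA : associative lsadd.
Proof. by move=> x y z; apply: ls_ext => k; rewrite !coef_lsadd addrA. Qed.

Lemma lsaddC : commutative lsadd.
Proof. by move=> x y; apply: ls_ext => k; rewrite !coef_lsadd addrC. Qed.

Lemma lsadd0 : left_id lszero lsadd.
Proof. by move=> x; apply: ls_ext => k; rewrite !coef_lsadd coef_lszero add0r. Qed.

(* Characteristic 2: the opposite is the identity. *)
Lemma lsaddxx : left_inverse lszero id lsadd.
Proof. by move=> x; apply: ls_ext => k; rewrite !coef_lsadd coef_lszero addrr_pchar2 ?pchar_F2. Qed.

HB.instance Definition _ := GRing.isZmodule.Build LS lsaddA lsaddC lsadd0 lsaddxx.
HB.instance Definition _ :=
  GRing.Zmodule_isComNzRing.Build LS lsmulA lsmulC lsmul1 lsmulDl lsone_neq0.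

Lemma pchar_LS : 2 \in [pchar LS].
Proof. by apply/andP; split=> //; apply/eqP; exact: lsaddxx. Qed.

Lemma lsaddE x y : lsadd x y = x + y. Proof. by []. Qed.

Lemma lsmulE x y : lsmul x y = x * y. Proof. by []. Qed.

Lemma lsoneE : lsone = 1. Proof. by []. Qed.

Lemma coef_add (x y : LS) k : coef (x + y) k = coef x k + coef y k.
Proof. by []. Qed.

Lemma lsexpE (z : LS) n : lsexp z n = z ^+ n.
Proof. by elim: n => [|n IH] //=; rewrite exprS -IH. Qed.

(** * Polynomials and their inverses *)

Fact lspoly_is_nmod_morphism : nmod_morphism lspoly.
Proof.
split; first by apply: ls_ext => k; rewrite coef_lszero.
by move=> p q; apply: ls_ext => -[n|n]; rewrite coef_add !coef_lspoly ?coefD ?addr0.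
Qed.

HB.instance Definition _ :=
  GRing.isNmodMorphism.Build {poly 'F_2} LS lspoly lspoly_is_nmod_morphism.

Lemma lspoly_neq0 (p : {poly 'F_2}) i :
  coef (lspoly p) i != 0 -> 0 <= i /\ i < (size p)%:Z.
Proof.
case: i => [i|i] //= H; split => //.
by rewrite ltz_nat ltnNge; apply: contra H => /(nth_default 0) ->.
Qed.

Fact lspoly_is_monoid_morphism : monoid_morphism lspoly.
Proof.
split=> // p q; apply: ls_ext => k; rewrite coef_lspoly.
case: k => [K|K].
  rewrite (@coef_mul _ _ _ 0 K.+1); last first.
    by move=> i /neq0_mulf [/lspoly_neq0 Hi /lspoly_neq0 Hj]; lia.
  rewrite coefM; apply: eq_bigr => i _; rewrite /mul_term !coef_lspoly add0r.
  by have -> : K%:Z - i%:Z = (K - i)%N%:Z by rewrite subzn // -ltnS.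
rewrite (@coef_mul _ _ _ 0 0) ?/wsum ?big_ord0 //.
by move=> i /neq0_mulf [/lspoly_neq0 Hi /lspoly_neq0 Hj]; lia.
Qed.

HB.instance Definition _ :=
  GRing.isMonoidMorphism.Build {poly 'F_2} LS lspoly lspoly_is_monoid_morphism.

Definition deg_lt (N : int) (z : LS) := forall k, N <= k -> coef z k = 0.

Lemma deg_ltW N M z : deg_lt N z -> N <= M -> deg_lt M z.
Proof. by move=> H NM k Mk; apply: H; lia. Qed.

Lemma deg_lt0 N : deg_lt N 0.
Proof. by move=> k _; apply: coef_lszero. Qed.

Lemma deg_ltD N y z : deg_lt N y -> deg_lt N z -> deg_lt N (y + z).
Proof. by move=> Hy Hz k Nk; rewrite coef_add Hy ?Hz ?addr0. Qed.

Lemma deg_ltM M N y z : deg_lt M y -> deg_lt N z -> deg_lt (M + N - 1) (y * z).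
Proof.
move=> Hy Hz k Hk.
have S : supported_in (mul_term y z k) 0 0.
  move=> i /neq0_mulf [H1 H2].
  have h1 : i < M by rewrite ltNge; apply: contra H1 => /Hy ->.
  have h2 : k - i < N by rewrite ltNge; apply: contra H2 => /Hz ->.
  lia.
by rewrite (coef_mul S) /wsum big_ord0.
Qed.

Lemma deg_lt_poly (p : {poly 'F_2}) : deg_lt (size p)%:Z (lspoly p).
Proof. by move=> [n|n] //= H; apply: nth_default; lia. Qed.

Lemma deg_lt_ub x : deg_lt (ub x + 1) x.
Proof. by move=> k H; apply: ubP; lia. Qed.

Lemma deg_lt_eq0 z : (forall N, deg_lt N z) -> z = 0.
Proof. by move=> H; apply: ls_ext => k; rewrite coef_lszero; apply: (H k). Qed.

Lemma deg_lt_coef_eq N y z k : deg_lt N (y + z) -> N <= k -> coef y k = coef z k.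
Proof.
by move=> H /H; rewrite coef_add => /eqP; rewrite addr_eq0 (oppr_pchar2 pchar_F2) => /eqP.
Qed.

(* The coefficient of t^k in 1/p is that of t^(N + k) in the polynomial
   quotient of t^N by p, for every large N; here N = |k|. *)
Definition lsinv_coef (p : {poly 'F_2}) (k : int) : 'F_2 :=
  ('X^(absz k) %/ p)`_(absz (k + (absz k)%:Z)).

Lemma size_divXn (p : {poly 'F_2}) n :
  p != 0 -> size ('X^n %/ p) = (n.+1 - (size p).-1)%N.
Proof. by move=> pn0; rewrite size_divp // size_polyXn. Qed.

Lemma lsinv_bounded (p : {poly 'F_2}) : bounded_above (lsinv_coef p).
Proof.
exists 1 => k Hk; rewrite /lsinv_coef.
have [->|pn0] := eqVneq p 0; first by rewrite divp0 coef0.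
by apply: nth_default; rewrite size_divXn //; lia.
Qed.

Definition lsinv p : LS := MkLS (lsinv_bounded p).

Lemma deg_lt_inv (p : {poly 'F_2}) (n : nat) :
  p != 0 -> (n <= size p)%N -> deg_lt (2 - n%:Z) (lsinv p).
Proof.
move=> pn0 hn k Hk /=; rewrite /lsinv_coef; apply: nth_default; rewrite size_divXn //.
have : (0 < size p)%N by rewrite size_poly_gt0.
lia.
Qed.

Lemma coef_divXn_shift (p : {poly 'F_2}) N N' j : p != 0 -> (N <= N')%N ->
  ('X^N' %/ p)`_(j + (N' - N)) = ('X^N %/ p)`_j.
Proof.
move=> pn0 NN; set e := (N' - N)%N.
have -> : 'X^N' = 'X^e * 'X^N :> {poly 'F_2}.
  by rewrite -exprD; congr (_ ^+ _); rewrite /e; lia.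
rewrite {1}(divp_eq 'X^N p) mulrDr mulrA divpD mulpK // coefD coefXnM.
have -> : (j + e < e)%N = false by lia.
rewrite addnK [X in _ + X]nth_default ?addr0 // size_divp //.
have := size_polyMleq 'X^e ('X^N %% p); rewrite size_polyXn.
have := ltn_modp 'X^N p; rewrite pn0 -!subn1.
move: (size ('X^N %% p)) (size ('X^e * _)) => a b; lia.
Qed.

Lemma coef_lsinv (p : {poly 'F_2}) k N : p != 0 -> (absz k <= N)%N -> 0 <= N%:Z + k ->
  coef (lsinv p) k = ('X^N %/ p)`_(absz (N%:Z + k)).
Proof.
move=> pn0 H1 H2; rewrite /= /lsinv_coef -(coef_divXn_shift _ pn0 H1).
by congr (_ `_ _); lia.
Qed.

Lemma lsinvP (p : {poly 'F_2}) : p != 0 -> lspoly p * lsinv p = 1.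
Proof.
move=> pn0; apply: ls_ext => k.
set sp := size p; have sp0 : (0 < sp)%N by rewrite size_poly_gt0.
pose N := (absz k + sp)%N; pose q := 'X^N %/ p; pose K := absz (N%:Z + k).
rewrite (@coef_mul _ _ _ 0 sp); last by move=> i /neq0_mulf [/lspoly_neq0 H _]; lia.
have -> : wsum 0 sp (mul_term (lspoly p) (lsinv p) k) = \sum_(m < sp) p`_m * q`_(K - m).
  apply: eq_bigr => m _; have hm := ltn_ord m.
  rewrite /mul_term add0r (@coef_lsinv p _ N) //= ?coef_lspoly; try lia.
  by congr (_ * q`_ _); lia.
have -> : \sum_(m < sp) p`_m * q`_(K - m) = (q * p)`_K.
  have HK : (sp <= K.+1)%N by lia.
  rewrite mulrC coefM (big_ord_widen _ (fun m => p`_m * q`_(K - m)) HK) big_mkcond /=.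
  apply: eq_bigr => m _; case: ifP => // /negbT; rewrite -leqNgt => /(nth_default 0) ->.
  by rewrite mul0r.
have -> : q * p = 'X^N - 'X^N %% p by rewrite {1}(divp_eq 'X^N p) addrK.
rewrite coefB coefXn [X in _ - X]nth_default ?subr0; last first.
  by have := ltn_modp 'X^N p; rewrite pn0 -/sp /K /N; move: (size _) => a; lia.
have -> : (K == N) = (k == 0) by rewrite /K /N; case: eqP; case: eqP => //; lia.
rewrite -[coef 1 k]/(coef (lspoly 1) k) coef_lspoly.
by case: k {q K N} => [[|n]|n] //=; rewrite coef1.
Qed.

Lemma lsinv_unique (p : {poly 'F_2}) u : p != 0 -> lspoly p * u = 1 -> u = lsinv p.
Proof. by move=> pn0 H; rewrite -[u]mulr1 -(lsinvP pn0) mulrA (mulrC u) H mul1r. Qed.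

Lemma lsinvM (p q : {poly 'F_2}) : p != 0 -> q != 0 -> lsinv (p * q) = lsinv p * lsinv q.
Proof.
move=> pn0 qn0; symmetry; apply: lsinv_unique; first by rewrite mulf_neq0.
by rewrite rmorphM mulrACA !lsinvP // mulr1.
Qed.

Lemma lsinv1 : lsinv 1 = 1.
Proof. by symmetry; apply: lsinv_unique; rewrite ?oner_neq0 // rmorph1 mulr1. Qed.

(** * Continued fractions *)

Section Matrix2.

Variable R : comNzRingType.

Inductive mx2 := Mx2 of R & R & R & R.

Definition mx2mul (A B : mx2) : mx2 :=
  let: Mx2 a b c d := A in let: Mx2 a' b' c' d' := B in
  Mx2 (a * a' + b * c') (a * b' + b * d') (c * a' + d * c') (c * b' + d * d').
Definition mx2id := Mx2 1 0 0 1.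
Definition mx2tr (A : mx2) := let: Mx2 a b c d := A in Mx2 a c b d.
Definition mx2det (A : mx2) := let: Mx2 a b c d := A in a * d - b * c.
Definition m11 (A : mx2) := let: Mx2 a _ _ _ := A in a.
Definition m12 (A : mx2) := let: Mx2 _ b _ _ := A in b.
Definition m21 (A : mx2) := let: Mx2 _ _ c _ := A in c.
Definition m22 (A : mx2) := let: Mx2 _ _ _ d := A in d.

Lemma mx2mulA A B C : mx2mul A (mx2mul B C) = mx2mul (mx2mul A B) C.
Proof. by case: A; case: B; case: C => *; congr Mx2; ring. Qed.

Lemma mx2mul1 A : mx2mul mx2id A = A.
Proof. by case: A => *; congr Mx2; ring. Qed.

Lemma mx2mulr1 A : mx2mul A mx2id = A.
Proof. by case: A => *; congr Mx2; ring. Qed.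

Lemma mx2trM A B : mx2tr (mx2mul A B) = mx2mul (mx2tr B) (mx2tr A).
Proof. by case: A; case: B => *; congr Mx2; ring. Qed.

Lemma mx2detM A B : mx2det (mx2mul A B) = mx2det A * mx2det B.
Proof. by case: A; case: B => * /=; ring. Qed.

End Matrix2.

(* [contmx [:: s_0; ...; s_n]] is the product of the matrices [[s_i, 1], [1, 0]];
   its first column holds the numerator and denominator of [s_0, ..., s_n]. *)
Definition contmx (l : seq {poly 'F_2}) : mx2 {poly 'F_2} :=
  foldr (fun s M => mx2mul (Mx2 s 1 1 0) M) (mx2id _) l.

Definition contp l := m11 (contmx l).
Definition contq l := m21 (contmx l).

Lemma contmx_cons s l : contmx (s :: l) = mx2mul (Mx2 s 1 1 0) (contmx l).
Proof. by []. Qed.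

Lemma contmx_cat l1 l2 : contmx (l1 ++ l2) = mx2mul (contmx l1) (contmx l2).
Proof.
elim: l1 => [|s l1 IH]; first by rewrite cat0s mx2mul1.
by rewrite cat_cons !contmx_cons IH mx2mulA.
Qed.

Lemma contmx_rev l : contmx (rev l) = mx2tr (contmx l).
Proof.
elim: l => [|s l IH] //.
have E1 : contmx [:: s] = Mx2 s 1 1 0 by rewrite contmx_cons mx2mulr1.
by rewrite rev_cons -cats1 contmx_cat IH E1 contmx_cons mx2trM.
Qed.

Lemma contmx_det l : mx2det (contmx l) = 1.
Proof.
elim: l => [|s l IH]; first by rewrite /= mulr1 mulr0 subr0.
by rewrite contmx_cons mx2detM IH /= mulr1 mulr0 mulr1 sub0r (oppr_pchar2 pchar_polyF2).
Qed.

Lemma contp_nil : contp [::] = 1. Proof. by []. Qed.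

Lemma contq_nil : contq [::] = 0. Proof. by []. Qed.

Lemma contp_cons s l : contp (s :: l) = s * contp l + contq l.
Proof. by rewrite /contp /contq contmx_cons; case: (contmx l) => * /=; rewrite mul1r. Qed.

Lemma contq_cons s l : contq (s :: l) = contp l.
Proof.
by rewrite /contp /contq contmx_cons; case: (contmx l) => * /=; rewrite mul1r mul0r addr0.
Qed.

Lemma contp_rcons l t : contp (rcons l t) = contp l * t + m12 (contmx l).
Proof. by rewrite /contp -cats1 contmx_cat contmx_cons; case: (contmx l) => * /=; ring. Qed.

Lemma contq_rcons l t :
  contq (rcons l t) = contq l * t + m22 (contmx l).
Proof. by rewrite /contq -cats1 contmx_cat contmx_cons; case: (contmx l) => * /=; ring. Qed.

(* The determinant identity p_{n+1} q_n - p_n q_{n+1} = (-1)^n, in characteristic 2. *)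
Lemma contpq_rcons l t : contp (rcons l t) * contq l + contp l * contq (rcons l t) = 1.
Proof.
rewrite contp_rcons contq_rcons; have := contmx_det l; rewrite /contp /contq.
case: (contmx l) => a b c d /= <-.
rewrite (oppr_pchar2 pchar_polyF2).
transitivity (a * d + b * c + (a * c * t + a * c * t)); first ring.
by rewrite addrr_pchar2 ?pchar_polyF2 // addr0.
Qed.

Definition nonconst (s : {poly 'F_2}) := (1 < size s)%N.

Lemma size_contpq l : all nonconst l ->
  (size (contq l) < size (contp l))%N /\ (size l < size (contp l))%N.
Proof.
elim: l => [|s l IH] /=; first by rewrite size_poly1 size_poly0.
case/andP => hs /IH [h1 h2]; rewrite /nonconst in hs.
have pn0 : contp l != 0 by rewrite -size_poly_gt0; lia.
have sn0 : s != 0 by rewrite -size_poly_gt0; lia.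
rewrite contp_cons contq_cons size_addl; rewrite size_mul //; move: hs h1 h2;
  by move: (size s) (size (contp l)) (size (contq l)) (size l); lia.
Qed.

Lemma contp_neq0 l : all nonconst l -> contp l != 0.
Proof. by case/size_contpq => _ h; rewrite -size_poly_gt0; lia. Qed.

Lemma contq_neq0 s l : all nonconst (s :: l) -> contq (s :: l) != 0.
Proof. by case/andP => _ h; rewrite contq_cons contp_neq0. Qed.

Lemma size_contq s l : all nonconst (s :: l) -> (size l < size (contq (s :: l)))%N.
Proof. by case/andP => _ /size_contpq [_ h]; rewrite contq_cons. Qed.

Lemma cf_fin_contpq l y : cf_fin l y -> y * lspoly (contq l) = lspoly (contp l).
Proof.
elim: l y => [|s l IH] y //=.
case: l IH => [|r l] IH.
  by move=> ->; rewrite contp_cons contq_cons contp_nil contq_nil rmorph1 !mulr1 addr0.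
case=> z [w [Hz [Hwz ->]]].
rewrite (contq_cons s (r :: l)) (contp_cons s (r :: l)) rmorphD rmorphM /= mulrDl.
by congr (_ + _); rewrite -(IH z Hz) mulrA -[w * z]lsmulE Hwz mul1r.
Qed.

Lemma cf_fin_val l y : all nonconst l -> l != [::] -> cf_fin l y ->
  y = lspoly (contp l) * lsinv (contq l).
Proof.
case: l => [|s l] // G _ /cf_fin_contpq <-.
by rewrite -mulrA lsinvP ?mulr1 // contq_neq0.
Qed.

Lemma cf_fin_contpq_div l : all nonconst l -> l != [::] ->
  cf_fin l (lspoly (contp l) * lsinv (contq l)).
Proof.
elim: l => [|s l IH] //= /andP [hs G] _.
case: l IH G => [|r l] IH G.
  by rewrite contp_cons contq_cons contp_nil contq_nil mulr1 addr0 lsinv1 mulr1.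
have pn0 := contp_neq0 G; have qn0 := contq_neq0 G.
exists (lspoly (contp (r :: l)) * lsinv (contq (r :: l))).
exists (lspoly (contq (r :: l)) * lsinv (contp (r :: l))).
split; first exact: IH.
split.
  rewrite lsmulE lsoneE.
  transitivity ((lspoly (contp (r :: l)) * lsinv (contp (r :: l))) *
    (lspoly (contq (r :: l)) * lsinv (contq (r :: l)))); first ring.
  by rewrite !lsinvP // mulr1.
rewrite lsaddE (contq_cons s (r :: l)) (contp_cons s (r :: l)).
by rewrite rmorphD rmorphM /= mulrDl -mulrA lsinvP // mulr1.
Qed.

Lemma all_nonconst_mkseq (s : nat -> {poly 'F_2}) n :
  (forall i, nonconst (s i)) -> all nonconst (mkseq s n).
Proof. by move=> H; apply/allP => x /mapP [i _ ->]. Qed.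

Lemma mkseqSl (T : Type) (f : nat -> T) n : mkseq f n.+1 = f 0%N :: mkseq (fun i => f i.+1) n.
Proof. by rewrite /mkseq /= (iotaDl 1 0) -map_comp. Qed.

Section Convergence.

Variable s : nat -> {poly 'F_2}.
Hypothesis s_nonconst : forall i, nonconst (s i).

Definition convergent n := lspoly (contp (mkseq s n.+1)) * lsinv (contq (mkseq s n.+1)).

Let all_nonconst n : all nonconst (mkseq s n) := all_nonconst_mkseq n s_nonconst.

Lemma contq_mkseq_neq0 n : contq (mkseq s n.+1) != 0.
Proof. by rewrite mkseqSl; apply: contq_neq0; rewrite -mkseqSl all_nonconst. Qed.

Lemma size_contq_mkseq n : (n < size (contq (mkseq s n.+1)))%N.
Proof.
have := @size_contq (s 0) (mkseq (fun i => s i.+1) n).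
by rewrite -mkseqSl size_mkseq; apply; apply: all_nonconst.
Qed.

(* Consecutive convergents differ by 1/(q_n q_{n+1}), of degree < -2n. *)
Lemma deg_lt_convergentS n : deg_lt (- 2 * n%:Z) (convergent n.+1 + convergent n).
Proof.
rewrite /convergent mkseqS.
set l := mkseq s n.+1; set P := contp l; set Q := contq l.
set P' := contp (rcons l _); set Q' := contq (rcons l _).
have hQ : Q != 0 := contq_mkseq_neq0 n.
have hQ' : Q' != 0 by have := contq_mkseq_neq0 n.+1; rewrite mkseqS.
have -> : lspoly P' * lsinv Q' + lspoly P * lsinv Q = lsinv Q * lsinv Q'.
  transitivity (lspoly P' * lsinv Q' * (lspoly Q * lsinv Q) +
                lspoly P * lsinv Q * (lspoly Q' * lsinv Q')).
    by rewrite !lsinvP // !mulr1.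
  transitivity ((lspoly (P' * Q + P * Q')) * (lsinv Q * lsinv Q')).
    by rewrite rmorphD !rmorphM /=; ring.
  by rewrite contpq_rcons rmorph1 mul1r.
have sQ' : (n.+2 <= size Q')%N by have := size_contq_mkseq n.+1; rewrite mkseqS.
apply: deg_ltW (deg_ltM (deg_lt_inv hQ (size_contq_mkseq n)) (deg_lt_inv hQ' sQ')) _.
lia.
Qed.

Lemma deg_lt_convergent_sub n m : (n <= m)%N ->
  deg_lt (- 2 * n%:Z) (convergent m + convergent n).
Proof.
elim: m => [|m IH].
  by rewrite leqn0 => /eqP ->; rewrite (addrr_pchar2 pchar_LS); apply: deg_lt0.
rewrite leq_eqVlt => /orP [/eqP <-|]; first by rewrite (addrr_pchar2 pchar_LS); apply: deg_lt0.
rewrite ltnS => nm.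
have -> : convergent m.+1 + convergent n =
          (convergent m.+1 + convergent m) + (convergent m + convergent n).
  by rewrite -addrA (addrA (convergent m)) (addrr_pchar2 pchar_LS) add0r.
apply: deg_ltD _ (IH nm); apply: deg_ltW (@deg_lt_convergentS m) _; lia.
Qed.

Lemma coef_convergent_stable n m k :
  - 2 * (minn n m)%:Z <= k -> coef (convergent n) k = coef (convergent m) k.
Proof.
move=> Hk; rewrite (deg_lt_coef_eq (deg_lt_convergent_sub (geq_minl n m)) Hk).
by rewrite (deg_lt_coef_eq (deg_lt_convergent_sub (geq_minr n m)) Hk).
Qed.

Definition cf_lim_coef (k : int) := coef (convergent (absz k)) k.

Lemma cf_lim_bounded : bounded_above cf_lim_coef.
Proof.
exists (size (s 0%N))%:Z => k Hk; rewrite /cf_lim_coef (@coef_convergent_stable _ 0).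
  rewrite /convergent contp_cons contq_cons contp_nil contq_nil mulr1 addr0 lsinv1 mulr1.
  by apply: deg_lt_poly; lia.
by rewrite minn0; lia.
Qed.

Lemma isCF_lim : isCF s (MkLS cf_lim_bounded).
Proof.
exists convergent; split.
  by move=> n; apply: cf_fin_contpq_div; rewrite ?all_nonconst.
move=> N; exists (absz N) => n Hn k Hk /=; rewrite /cf_lim_coef.
apply: coef_convergent_stable; have : ((absz N)%:Z <= n%:Z) by rewrite lez_nat.
lia.
Qed.

Lemma deg_lt_inv_cf_approx x beta : isCF s x -> beta * x = 1 ->
  forall N, exists n0, forall n, (n0 <= n)%N ->
    deg_lt N (beta + lspoly (contq (mkseq s n.+1)) * lsinv (contp (mkseq s n.+1))).
Proof.
move=> [xs [Hcf Hcv]] Hbx N; have [n0 Hn0] := Hcv (N - ub beta).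
exists n0 => n hn; set l := mkseq s n.+1.
have pn0 : contp l != 0 := contp_neq0 (all_nonconst n.+1).
have qn0 : contq l != 0 := contq_mkseq_neq0 n.
have Exs : xs n = lspoly (contp l) * lsinv (contq l).
  by apply: cf_fin_val => //; [exact: all_nonconst | exact: Hcf].
(* 1/x + q/p = (1/x) (q/p) (p/q + x), and p/q is close to x. *)
have -> : beta + lspoly (contq l) * lsinv (contp l) =
    beta * (lsinv (contp l) * lspoly (contq l)) * (xs n + x).
  rewrite Exs mulrDr.
  transitivity (beta * ((lspoly (contp l) * lsinv (contp l)) *
                        (lspoly (contq l) * lsinv (contq l))) +
                (beta * x) * (lsinv (contp l) * lspoly (contq l))).
    by rewrite !lsinvP // !mulr1 Hbx mul1r (mulrC (lsinv (contp l))).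
  ring.
have h1 : deg_lt 1 (lsinv (contp l) * lspoly (contq l)).
  apply: deg_ltW (deg_ltM (deg_lt_inv pn0 (leqnn _)) (@deg_lt_poly (contq l))) _.
  have [+ _] := size_contpq (all_nonconst n.+1).
  by rewrite -/l -ltz_nat; move: (size (contq l)) (size (contp l)) => u v; lia.
have h2 : deg_lt (N - ub beta) (xs n + x).
  by move=> k hk; rewrite coef_add (Hn0 n hn k hk) (addrr_pchar2 pchar_F2).
by apply: deg_ltW (deg_ltM (deg_ltM (@deg_lt_ub beta) h1) h2) _; lia.
Qed.

End Convergence.

(** * The words W_n *)

Section Words.

Variable eps : nat -> {poly 'F_2}.

Lemma size_Wword m : size (Wword eps m) = (2 ^ m - 1)%N.
Proof.
elim: m => [|m IH] //=; rewrite size_cat /= IH expnS.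
have : (0 < 2 ^ m)%N by rewrite expn_gt0.
lia.
Qed.

Lemma rev_Wword m : rev (Wword eps m) = Wword eps m.
Proof. by elim: m => [|m IH] //=; rewrite rev_cat rev_cons IH -cats1 -catA. Qed.

Lemma nth_Wword_prefix m m' i : (m <= m')%N -> (i < size (Wword eps m))%N ->
  nth 0 (Wword eps m') i = nth 0 (Wword eps m) i.
Proof.
move=> + hi; elim: m' => [|m' IH]; first by rewrite leqn0 => /eqP ->.
rewrite leq_eqVlt => /orP [/eqP -> //|]; rewrite ltnS => hm; rewrite -(IH hm) /= nth_cat ifT //.
apply: leq_trans hi _; rewrite !size_Wword.
have : (2 ^ m <= 2 ^ m')%N by rewrite leq_exp2l.
lia.
Qed.

Lemma mkseq_sseq m : mkseq (sseq eps) (2 ^ m - 1) = Wword eps m.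
Proof.
apply: (@eq_from_nth _ 0); first by rewrite size_mkseq size_Wword.
rewrite size_mkseq => i hi; rewrite nth_mkseq // /sseq.
have hi1 : (i < size (Wword eps i.+1))%N.
  by rewrite size_Wword; have := ltn_expl i.+1 (isT : (1 < 2)%N); lia.
have hi2 : (i < size (Wword eps m))%N by rewrite size_Wword.
have [h|h] := leqP i.+1 m; first by rewrite (nth_Wword_prefix h hi1).
by rewrite (nth_Wword_prefix (ltnW h) hi2).
Qed.

Lemma all_Wword (P : pred {poly 'F_2}) m : (forall j, P (eps j)) -> all P (Wword eps m).
Proof. by move=> H; elim: m => [|m IH] //=; rewrite all_cat IH /= H IH. Qed.

Lemma sseq_nonconst i : (forall j, nonconst (eps j)) -> nonconst (sseq eps i).
Proof.
move=> H; apply: (allP (all_Wword i.+1 H)); apply: mem_nth.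
by rewrite size_Wword; have := ltn_expl i.+1 (isT : (1 < 2)%N); lia.
Qed.

Definition Pw m := contp (Wword eps m).
Definition Qw m := contq (Wword eps m).

(* Since W_m is a palindrome, its continuant matrix is symmetric. *)
Lemma contmx_Wword_sym m : m12 (contmx (Wword eps m)) = m21 (contmx (Wword eps m)).
Proof.
have := contmx_rev (Wword eps m); rewrite rev_Wword.
by case: (contmx _) => a b c d /= [].
Qed.

Lemma contmx_WwordS m : contmx (Wword eps m.+1) =
  mx2mul (contmx (Wword eps m)) (mx2mul (Mx2 (eps m) 1 1 0) (contmx (Wword eps m))).
Proof. by rewrite /= contmx_cat. Qed.

Lemma PwS m : Pw m.+1 = eps m * Pw m ^+ 2.
Proof.
rewrite /Pw /contp contmx_WwordS; have := contmx_Wword_sym m.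
case: (contmx _) => a b c d /= ->.
transitivity (eps m * a ^+ 2 + (a * c + a * c)); first ring.
by rewrite (addrr_pchar2 pchar_polyF2) addr0.
Qed.

Lemma QwS m : Qw m.+1 = eps m * Pw m * Qw m + 1.
Proof.
rewrite /Pw /Qw /contp /contq contmx_WwordS.
have := contmx_Wword_sym m; have := contmx_det (Wword eps m).
case: (contmx _) => a b c d /= det1 E; subst b.
transitivity (eps m * a * c + (a * d - c * c)); first by rewrite (oppr_pchar2 pchar_polyF2); ring.
by rewrite det1.
Qed.

Lemma Qw0 : Qw 0 = 0. Proof. by []. Qed.

Lemma Pw1 : Pw 1 = eps 0%N.
Proof. by rewrite /Pw /= contp_cons contp_nil contq_nil mulr1 addr0. Qed.

Hypothesis eps_nonconst : forall j, nonconst (eps j).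

Lemma eps_neq0 j : eps j != 0.
Proof. by rewrite -size_poly_gt0; have := eps_nonconst j; rewrite /nonconst; lia. Qed.

Lemma Pw_neq0 m : Pw m != 0.
Proof. exact/contp_neq0/all_Wword. Qed.

Lemma size_Pw m : (m < size (Pw m))%N.
Proof.
have [_] := size_contpq (all_Wword m eps_nonconst).
by rewrite size_Wword; have := ltn_expl m (isT : (1 < 2)%N); rewrite /Pw; lia.
Qed.

(* [invPw m] is 1/P_m and [betaW m] = Q_m/P_m is the reciprocal of the
   continued fraction of the word W_m. *)
Definition invPw m := lsinv (Pw m).
Definition betaW m := lspoly (Qw m) * invPw m.

Lemma invPwS m : invPw m.+1 = lsinv (eps m) * invPw m ^+ 2.
Proof.
by rewrite /invPw PwS lsinvM ?eps_neq0 ?expf_neq0 ?Pw_neq0 // expr2 lsinvM ?Pw_neq0.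
Qed.

Lemma betaWS m : betaW m.+1 = betaW m + invPw m.+1.
Proof.
rewrite /betaW invPwS QwS rmorphD !rmorphM rmorph1 /=.
have e1 := lsinvP (eps_neq0 m); have e2 := lsinvP (Pw_neq0 m).
transitivity ((lspoly (eps m) * lsinv (eps m)) * (lspoly (Pw m) * invPw m) *
  (lspoly (Qw m) * invPw m) + lsinv (eps m) * invPw m ^+ 2); first ring.
by rewrite e1 /invPw e2 !mul1r.
Qed.

Lemma betaW0 : betaW 0 = 0.
Proof. by rewrite /betaW Qw0 rmorph0 mul0r. Qed.

Lemma deg_lt_invPw m : deg_lt (1 - m%:Z) (invPw m).
Proof. by apply: deg_ltW (deg_lt_inv (Pw_neq0 m) (size_Pw m)) _; lia. Qed.

Lemma betaW_approx x beta : isCF (sseq eps) x -> beta * x = 1 ->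
  forall N, exists m0, forall m, (m0 <= m)%N -> deg_lt N (beta + betaW m).
Proof.
move=> Hx Hbx N.
have [n0 Hn0] := deg_lt_inv_cf_approx (fun i => sseq_nonconst i eps_nonconst) Hx Hbx N.
exists n0.+2 => m hm; have := ltn_expl m (isT : (1 < 2)%N) => hm2.
have := Hn0 (2 ^ m - 2)%N; have -> : (2 ^ m - 2).+1 = (2 ^ m - 1)%N by lia.
by rewrite mkseq_sseq; apply; lia.
Qed.

End Words.

(** * The sequence a, (b, c)^oo *)

Section Quartic.

Variables a b c : {poly 'F_2}.
Local Notation eps := (eps_abc a b c).
Local Notation K := (b * c * (b + c))%R.

Lemma eps_abcS j : eps j.+1 = if odd j then c else b.
Proof. by rewrite /eps_abc /=; case: (odd j). Qed.

Lemma size_eps_abcS j : (size (eps j.+1) <= size b + size c)%N.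
Proof. by rewrite eps_abcS; case: (odd j); lia. Qed.

Definition quartic (ainv z : LS) :=
  z ^+ 4 + lspoly (b * c) * z ^+ 2 + lspoly K * z + lspoly K * ainv + lspoly (c ^+ 2) * ainv ^+ 2.

Lemma quarticD ainv z d :
  quartic ainv (z + d) = quartic ainv z + (d ^+ 4 + lspoly (b * c) * d ^+ 2 + lspoly K * d).
Proof.
rewrite /quartic [(z + d) ^+ 4](@exprD_pchar2 _ _ _ 2 pchar_LS).
by rewrite [(z + d) ^+ 2](@exprD_pchar2 _ _ _ 1 pchar_LS); ring.
Qed.

Lemma quartic_rootE ainv z : quartic ainv z = 0 ->
  z ^+ 4 = lspoly K * ainv + (lspoly (c ^+ 2) * ainv ^+ 2 +
                              (lspoly K * z + lspoly (b * c) * z ^+ 2)).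
Proof.
move=> q0; apply/eqP; rewrite -subr_eq0 (oppr_pchar2 pchar_LS) -q0.
by apply/eqP; rewrite /quartic; ring.
Qed.

Lemma deg_lt_quartic_incr N d : N <= 0 ->
  deg_lt (N - (size K)%:Z - (size (b * c))%:Z) d ->
  deg_lt N (d ^+ 4 + lspoly (b * c) * d ^+ 2 + lspoly K * d).
Proof.
set D := N - _ - _ => N0 hd.
have d2 : deg_lt (2 * D - 1) (d ^+ 2) by apply: deg_ltW (deg_ltM hd hd) _; lia.
have d4 : deg_lt (4 * D - 3) (d ^+ 4).
  by rewrite (_ : 4%N = 2 + 2)%N // exprD; apply: deg_ltW (deg_ltM d2 d2) _; lia.
apply: deg_ltD; first apply: deg_ltD.
- by apply: deg_ltW d4 _; rewrite /D; lia.
- by apply: deg_ltW (deg_ltM (@deg_lt_poly (b * c)) d2) _; rewrite /D; lia.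
- by apply: deg_ltW (deg_ltM (@deg_lt_poly K) hd) _; rewrite /D; lia.
Qed.

Hypotheses (ha : nonconst a) (hb : nonconst b) (hc : nonconst c).

Lemma eps_abc_nonconst j : nonconst (eps j).
Proof. by case: j => [|j] //; rewrite eps_abcS; case: (odd j). Qed.

Lemma invPw_sqr j : invPw eps j.+1 ^+ 2 = lspoly (eps j.+1) * invPw eps j.+2.
Proof.
rewrite (invPwS eps_abc_nonconst j.+1) mulrA lsinvP ?mul1r //.
exact/eps_neq0/eps_abc_nonconst.
Qed.

Lemma quartic_betaW m :
  quartic (lsinv a) (betaW eps m) =
    lspoly K * invPw eps m.+1 + lspoly (b * c * eps m.+2) * invPw eps m.+2.
Proof.
elim: m => [|m IH].
  have E1 : invPw eps 1 = lsinv a by rewrite /invPw Pw1.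
  have Eb : lspoly b * lsinv b = 1 := lsinvP (eps_neq0 eps_abc_nonconst 1).
  rewrite betaW0 /quartic (invPwS eps_abc_nonconst 1) E1 -[eps 1]/b -[eps 2]/c.
  transitivity (lspoly K * lsinv a + lspoly (c ^+ 2) * lsinv a ^+ 2 * (lspoly b * lsinv b)).
    by rewrite Eb; ring.
  by rewrite !rmorphM /=; ring.
rewrite (betaWS eps_abc_nonconst) quarticD IH.
have E4 : invPw eps m.+1 ^+ 4 = lspoly (eps m.+1) ^+ 2 * (lspoly (eps m.+2) * invPw eps m.+3).
  by rewrite -invPw_sqr (_ : 4%N = 2 * 2)%N // exprM invPw_sqr exprMn.
have p1 : lspoly (b * c * eps m.+2) + lspoly (b * c) * lspoly (eps m.+1) = lspoly K.
  rewrite -rmorphM -rmorphD !eps_abcS /=; congr lspoly; case: (odd m) => /=; ring.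
have p2 : lspoly (eps m.+1) ^+ 2 * lspoly (eps m.+2) = lspoly (b * c * eps m.+3).
  rewrite -rmorphXn -rmorphM !eps_abcS /=; congr lspoly; case: (odd m) => /=; ring.
rewrite E4 invPw_sqr.
transitivity ((lspoly (b * c * eps m.+2) + lspoly (b * c) * lspoly (eps m.+1)) * invPw eps m.+2 +
   (lspoly (eps m.+1) ^+ 2 * lspoly (eps m.+2)) * invPw eps m.+3 +
   (lspoly K * invPw eps m.+1 + lspoly K * invPw eps m.+1)); first ring.
by rewrite p1 p2 (addrr_pchar2 pchar_LS) addr0.
Qed.

Lemma deg_lt_quartic_betaW N m : N <= 0 ->
  (absz N + size K + size (b * c)%R + size b + size c <= m)%N ->
  deg_lt N (quartic (lsinv a) (betaW eps m)).
Proof.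
move=> N0 hm; have Hnc := eps_abc_nonconst.
rewrite quartic_betaW; apply: deg_ltD.
  apply: deg_ltW (deg_ltM (@deg_lt_poly K) (deg_lt_invPw Hnc (m:=m.+1))) _; lia.
apply: deg_ltW (deg_ltM (@deg_lt_poly (b * c * eps m.+2)) (deg_lt_invPw Hnc (m:=m.+2))) _.
have := size_eps_abcS m.+1; have := size_mul_leq (b * c) (eps m.+2); rewrite -subn1.
lia.
Qed.

End Quartic.

Theorem mainTheorem4 (a b c : {poly 'F_2}) :
  (1 < size a)%N -> (1 < size b)%N -> (1 < size c)%N ->
  (exists x : LS, isCF (sseq (eps_abc a b c)) x) /\
  forall x beta ainv : LS,
    isCF (sseq (eps_abc a b c)) x ->
    lsmul beta x = lsone ->            (* beta = 1 / CF(s(eps)) *)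
    lsmul ainv (lspoly a) = lsone ->   (* ainv = 1 / a *)
    lsexp beta 4 =
      lsadd (lsmul (lspoly (b * c * (b + c))) ainv)
     (lsadd (lsmul (lspoly (c ^+ 2)) (lsexp ainv 2))
     (lsadd (lsmul (lspoly (b * c * (b + c))) beta)
            (lsmul (lspoly (b * c)) (lsexp beta 2)))).
Proof.
move=> ha hb hc; have eps_nc := eps_abc_nonconst ha hb hc.
have s_nc i := sseq_nonconst i eps_nc.
split; first by exists (MkLS (cf_lim_bounded s_nc)); exact: isCF_lim.
move=> x beta ainv Hx Hbx Hai.
have -> : ainv = lsinv a.
  by apply: lsinv_unique; [rewrite -size_poly_gt0; lia | rewrite mulrC].
rewrite !lsexpE !lsaddE !lsmulE; apply: quartic_rootE.
apply: deg_lt_eq0 => N0; pose N := - (absz N0)%:Z.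
apply: (@deg_ltW N); last lia.
have [m0 Hm0] := betaW_approx eps_nc Hx Hbx
  (N - (size (b * c * (b + c)))%:Z - (size (b * c))%:Z).
pose m := maxn m0 (absz N + size (b * c * (b + c))%R + size (b * c)%R + size b + size c).
have -> : beta = betaW (eps_abc a b c) m + (beta + betaW (eps_abc a b c) m).
  by rewrite addrC -addrA (addrr_pchar2 pchar_LS) addr0.
rewrite quarticD; apply: deg_ltD.
- by apply: (deg_lt_quartic_betaW ha hb hc); rewrite /m /N; lia.
- by apply: deg_lt_quartic_incr; [rewrite /N; lia | apply: Hm0; rewrite /m; lia].
Qed.
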